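(* Let $\delta=S/(2\pi\mu)\in(0,1)$, and let $\tau_0=\tau_1/k$, where $\tau_1>k$ is the positive root of $\lambda_1(\tau)=k$. For $a\in(0,b)$ and $\nu=0$, the equation $\mathcal R(a)=0$, with $\mathcal R(a)=kS\,g(-a;\tau_1,k)+2\pi\mu\,g'(-a;\tau_1,k)$, is equivalent to $$\tanh(ak\tau_0)=\frac{\tau_0(1+\delta)}{\tau_0^2+\delta}.$$ Moreover: (i) if $k,b,\delta$ are fixed and $\alpha=1-\beta$ is sufficiently small, this equation has a solution $a^*\in(0,b)$, and $a^*\sim \alpha^2(1+\delta)/(4k)$ as $\alpha\to0$; (ii) if $k,b,\delta$ are fixed and $\beta$ is sufficiently small, this equation has no solution $a\in(0,b)$.
   Context: Fix $k>0$, $b>0$, $\beta\in(0,1)$, $\alpha=1-\beta$. $\lambda_1(\tau)=\dfrac{\alpha\tau\tanh b\tau}{1+\beta\tanh b\tau}$; the equation $\lambda_1(\tau)=k$ has a unique positive root $\tau_1$, and $\tau_1>k$. $g(y;\tau,\lambda)=\tau\cosh\tau y+\lambda\sinh\tau y$, $g'=\partial g/\partial y$. $S>0$ is the area enclosed by a simple closed smooth curve $C$ and $\mu>0$ is its vertical dipole strength: with $n=(n_1,n_2)$ the unit normal to $C$ pointing into its interior, $\Psi$ the solution of $\Delta\Psi=0$ outside $C$, $\partial\Psi/\partial n=n_2$ on $C$, $\nabla\Psi\to 0$ at infinity, $\mu=\frac1{2\pi}(S+\int_C n_2\Psi\,dl)$; one has $S<2\pi\mu$. *)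

From Stdlib Require Import Reals ClassicalEpsilon.
From Coquelicot Require Import Coquelicot.
Open Scope R_scope.

Definition lambda1 (b beta tau : R) : R :=
  (1 - beta) * tau * tanh (b * tau) / (1 + beta * tanh (b * tau)).

Definition tau1 (k b beta : R) : R :=
  epsilon (inhabits 0) (fun t => 0 < t /\ lambda1 b beta t = k).

Definition g (y tau lam : R) : R := tau * cosh (tau * y) + lam * sinh (tau * y).

Definition g' (y tau lam : R) : R := Derive (fun z => g z tau lam) y.

Definition Rfun (k b beta S mu a : R) : R :=
  k * S * g (- a) (tau1 k b beta) k + 2 * PI * mu * g' (- a) (tau1 k b beta) k.

Definition delta (S mu : R) : R := S / (2 * PI * mu).
Definition tau0 (k b beta : R) : R := tau1 k b beta / k.

Definition key_eq (k b beta S mu a : R) : Prop :=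
  tanh (a * k * tau0 k b beta) =
  tau0 k b beta * (1 + delta S mu) / (tau0 k b beta ^ 2 + delta S mu).

(* Write t0 = tau0 = tau1/k, d = delta = S/(2 pi mu) in (0,1) and T = tanh (b k t0).
   - Factorization: R(a) = 2 pi mu cosh(a k t0) (tau1^2 + k^2 d) (rhs - tanh(a k t0))
     with rhs = t0 (1+d)/(t0^2+d), so R(a) = 0 is exactly the key equation
     tanh(a k t0) = rhs.  As tanh is increasing, this equation has a root in (0,b)
     iff 0 < rhs < T, and the root is atanh(rhs)/(k t0).
   - Dispersion relation: lambda1(tau1) = k reads ((1-beta) t0 - beta) T = 1, and the
     bound tanh y >= y/(1+y) gives 1 < (1-beta) t0 - beta <= 1 + 1/(b k t0).
   - (i) For beta = 1 - alpha this gives alpha t0 = 2 + O(alpha), hence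
     rhs = O(alpha) < T, and the ratio a*/(alpha^2 (1+d)/(4k)) equals
     4 (atanh rhs / rhs) / (alpha^2 (t0^2+d)) = 1 + O(alpha).
   - (ii) For beta <= 1/2, t0 stays in a compact subset of (1, +oo); then
     rhs - T has the sign of d (t0 - 1) - beta (1+d) t0, positive for small beta. *)

From Stdlib Require Import Reals Lra Psatz ClassicalEpsilon.
From Coquelicot Require Import Coquelicot.
Open Scope R_scope.

(* tanh x = (e^{2x} - 1)/(e^{2x} + 1): the form from which its bounds are read off. *)
Lemma tanh_exp x : tanh x = 1 - 2 / (exp (2 * x) + 1).
Proof.
  unfold tanh, sinh, cosh.
  replace (2 * x) with (x + x) by ring.
  rewrite exp_plus, exp_Ropp.
  pose proof (exp_pos x).
  field. split; [nra | lra].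
Qed.

Lemma tanh_bounds x : -1 < tanh x < 1.
Proof.
  rewrite tanh_exp. pose proof (exp_pos (2 * x)).
  set (q := 2 / (exp (2 * x) + 1)).
  assert (q * (exp (2 * x) + 1) = 2) by (unfold q; field; lra).
  assert (0 < q) by (unfold q; apply Rdiv_lt_0_compat; lra).
  nra.
Qed.

Lemma tanh_increasing x y : x < y -> tanh x < tanh y.
Proof.
  intros Hxy. rewrite !tanh_exp.
  assert (exp (2 * x) < exp (2 * y)) by (apply exp_increasing; lra).
  pose proof (exp_pos (2 * x)).
  assert (2 / (exp (2 * y) + 1) < 2 / (exp (2 * x) + 1)).
  { unfold Rdiv. apply Rmult_lt_compat_l; [lra|]. apply Rinv_lt_contravar; nra. }
  lra.
Qed.

Lemma tanh_le x y : x <= y -> tanh x <= tanh y.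
Proof. intros [Hxy | ->]; [left; now apply tanh_increasing | right; reflexivity]. Qed.

Lemma tanh_lt_reflect x y : tanh x < tanh y -> x < y.
Proof.
  intros Hlt. destruct (Rlt_or_le x y) as [|[Hyx|Hyx]]; [assumption| |].
  - apply tanh_increasing in Hyx. lra.
  - subst. lra.
Qed.

Lemma tanh_0 : tanh 0 = 0.
Proof. unfold tanh. rewrite sinh_0. unfold Rdiv. ring. Qed.

Lemma tanh_pos x : 0 < x -> 0 < tanh x.
Proof. intros Hx. rewrite <- tanh_0. now apply tanh_increasing. Qed.

(* Comparison with the identity on [0, +oo), from exp y >= 1 + y:
   x / (1 + x) <= tanh x  and  tanh x (1 - 2 x) <= x. *)
Lemma tanh_lower x : 0 <= x -> x <= tanh x * (1 + x).
Proof.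
  intros Hx. rewrite tanh_exp.
  pose proof (exp_ineq1_le (2 * x)).
  set (u := exp (2 * x)) in *.
  set (q := 2 / (u + 1)).
  assert (q * (u + 1) = 2) by (unfold q; field; lra).
  assert (0 < q) by (unfold q; apply Rdiv_lt_0_compat; lra).
  nra.
Qed.

Lemma tanh_upper x : 0 <= x -> tanh x * (1 - 2 * x) <= x.
Proof.
  intros Hx. rewrite tanh_exp.
  pose proof (exp_ineq1_le (- (2 * x))) as Hinv.
  rewrite exp_Ropp in Hinv.
  pose proof (exp_ineq1_le (2 * x)).
  pose proof (exp_pos (2 * x)).
  set (u := exp (2 * x)) in *.
  assert (Hu : u * (1 - 2 * x) <= 1).
  { assert (u * / u = 1) by (field; lra). nra. }
  set (q := 2 / (u + 1)).
  assert (q * (u + 1) = 2) by (unfold q; field; lra).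
  assert (0 < q) by (unfold q; apply Rdiv_lt_0_compat; lra).
  nra.
Qed.

Definition atanh (r : R) : R := ln ((1 + r) / (1 - r)) / 2.

Lemma tanh_atanh r : -1 < r < 1 -> tanh (atanh r) = r.
Proof.
  intros Hr. rewrite tanh_exp. unfold atanh.
  replace (2 * (ln ((1 + r) / (1 - r)) / 2)) with (ln ((1 + r) / (1 - r))) by field.
  rewrite exp_ln by (apply Rdiv_lt_0_compat; lra).
  field. lra.
Qed.

Lemma atanh_ratio r : 0 < r <= 1/4 -> 1 - 4 * r <= atanh r / r <= 1 + 2 * r.
Proof.
  intros Hr.
  assert (Hx : tanh (atanh r) = r) by (apply tanh_atanh; lra).
  assert (Hx0 : 0 < atanh r).
  { apply tanh_lt_reflect. now rewrite tanh_0, Hx. }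
  pose proof (tanh_lower (atanh r) ltac:(lra)) as Hlo.
  pose proof (tanh_upper (atanh r) ltac:(lra)) as Hup.
  rewrite Hx in Hlo, Hup.
  set (p := atanh r / r).
  assert (Hp : atanh r = p * r) by (unfold p; field; lra).
  rewrite Hp in Hlo, Hup.
  assert (Hp1 : p * (1 - r) <= 1) by nra.
  assert (Hp2 : 1 - 2 * p * r <= p) by nra.
  split; nra.
Qed.

(* lambda1 is smooth since its denominator 1 + beta tanh(b tau) is positive. *)
Lemma lambda1_continuous b beta : 0 <= beta < 1 -> continuity (lambda1 b beta).
Proof.
  intros Hbeta x. apply continuity_pt_filterlim.
  apply (ex_derive_continuous (lambda1 b beta)).
  pose proof (tanh_bounds (b * x)) as HT.
  pose proof (exp_pos (b * x)). pose proof (exp_pos (- (b * x))).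
  unfold lambda1, tanh, sinh, cosh. auto_derive.
  change ((exp (b * x) + - exp (- (b * x))) * / 2 * / ((exp (b * x) + exp (- (b * x))) * / 2))
    with (tanh (b * x)).
  repeat split; intro; [lra | lra | nra].
Qed.

(* lambda1 vanishes at 0 and exceeds k at M = 4k/(1-beta) + 1/b, so by the
   intermediate value theorem the equation lambda1 = k has a positive root. *)
Lemma lambda1_root_exists k b beta : 0 < k -> 0 < b -> 0 < beta < 1 ->
  exists t, 0 < t /\ lambda1 b beta t = k.
Proof.
  intros hk hb Hbeta.
  set (M := 4 * k / (1 - beta) + 1 / b).
  assert (HM : (1 - beta) * M = 4 * k + (1 - beta) / b) by (unfold M; field; lra).
  assert (HbM : b * M = 4 * k * b / (1 - beta) + 1) by (unfold M; field; lra).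
  assert (Hkb : 0 < 4 * k * b / (1 - beta)) by (apply Rdiv_lt_0_compat; nra).
  assert (Hbeta' : 0 < (1 - beta) / b) by (apply Rdiv_lt_0_compat; lra).
  (* b M >= 1 gives tanh (b M) >= 1/2, so lambda1 M >= (1 - beta) M / 4 > k *)
  set (T := tanh (b * M)).
  pose proof (tanh_lower (b * M) ltac:(lra)) as HTlo. fold T in HTlo.
  pose proof (tanh_bounds (b * M)) as HT. fold T in HT.
  assert (HT2 : 1 / 2 <= T) by nra.
  assert (HlamM : lambda1 b beta M * (1 + beta * T) = (1 - beta) * M * T)
    by (unfold lambda1; fold T; field; nra).
  assert (Hk : k < lambda1 b beta M).
  { assert (2 * k < (1 - beta) * M * T) by nra.
    assert (0 < 1 + beta * T < 2) by nra.
    apply Rmult_lt_reg_r with (1 + beta * T); nra. }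
  assert (H0 : lambda1 b beta 0 = 0) by (unfold lambda1; rewrite Rmult_0_r; unfold Rdiv; ring).
  destruct (IVT (fun t => lambda1 b beta t - k) 0 M) as [t [[Ht0 HtM] Ht]].
  - apply continuity_minus; [apply lambda1_continuous; lra | apply continuity_const; now intros ? ?].
  - unfold M. apply Rplus_lt_0_compat; apply Rdiv_lt_0_compat; lra.
  - simpl. lra.
  - simpl. lra.
  - exists t. split; [|lra]. destruct Ht0 as [|<-]; [assumption|lra].
Qed.

Lemma tau1_spec k b beta : 0 < k -> 0 < b -> 0 < beta < 1 ->
  0 < tau1 k b beta /\ lambda1 b beta (tau1 k b beta) = k.
Proof.
  intros hk hb Hbeta. unfold tau1.
  apply epsilon_spec, lambda1_root_exists; assumption.
Qed.

Lemma tau0_equation k b beta : 0 < k -> 0 < b -> 0 < beta < 1 ->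
  0 < tau0 k b beta /\
  ((1 - beta) * tau0 k b beta - beta) * tanh (b * k * tau0 k b beta) = 1.
Proof.
  intros hk hb Hbeta. destruct (tau1_spec k b beta hk hb Hbeta) as [Ht Hlam].
  unfold tau0. replace (b * k * (tau1 k b beta / k)) with (b * tau1 k b beta) by (field; lra).
  split; [apply Rdiv_lt_0_compat; lra|].
  unfold lambda1 in Hlam. set (T := tanh (b * tau1 k b beta)) in *.
  pose proof (tanh_pos (b * tau1 k b beta) ltac:(nra)) as HT. fold T in HT.
  assert (Hden : 0 < 1 + beta * T) by nra.
  apply (Rmult_eq_reg_l k); [|lra].
  rewrite <- Hlam at 3. field. lra.
Qed.

(* Since 0 < T < 1 and T >= y/(1+y) with y = b k tau0, the factor 1/T in the
   dispersion relation lies in (1, 1 + 1/y]. *)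
Lemma tau0_bounds k b beta : 0 < k -> 0 < b -> 0 < beta < 1 ->
  1 < (1 - beta) * tau0 k b beta - beta <= 1 + 1 / (b * k * tau0 k b beta).
Proof.
  intros hk hb Hbeta. destruct (tau0_equation k b beta hk hb Hbeta) as [Ht0 Heq].
  set (y := b * k * tau0 k b beta) in *.
  set (E := (1 - beta) * tau0 k b beta - beta) in *.
  assert (Hy : 0 < y) by (unfold y; apply Rmult_lt_0_compat; nra).
  pose proof (tanh_bounds y) as HT. pose proof (tanh_pos y Hy) as HT0.
  pose proof (tanh_lower y ltac:(lra)) as Hlo.
  assert (HE : 0 < E) by nra.
  split.
  - assert (E - 1 = E * (1 - tanh y)) by nra. nra.
  - assert (HEy : E * y <= 1 + y) by nra.
    assert (Hinv : 0 < 1 / y) by (apply Rdiv_lt_0_compat; lra).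
    assert (1 / y * y = 1) by (field; lra).
    nra.
Qed.

Lemma g'_formula y t l : g' y t l = t * t * sinh (t * y) + l * t * cosh (t * y).
Proof.
  unfold g'. apply is_derive_unique. unfold g, sinh, cosh.
  auto_derive; [exact I|]. field.
Qed.

Definition key_rhs (k b beta S mu : R) : R :=
  tau0 k b beta * (1 + delta S mu) / (tau0 k b beta ^ 2 + delta S mu).

Lemma delta_pos S mu : 0 < S -> 0 < mu -> 0 < delta S mu.
Proof. intros hS hmu. unfold delta. pose proof PI_RGT_0. apply Rdiv_lt_0_compat; nra. Qed.

Lemma Rfun_factorization k b beta S mu a : 0 < k -> 0 < S -> 0 < mu ->
  Rfun k b beta S mu a =
  2 * PI * mu * cosh (a * k * tau0 k b beta)
  * (tau1 k b beta ^ 2 + k ^ 2 * delta S mu)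
  * (key_rhs k b beta S mu - tanh (a * k * tau0 k b beta)).
Proof.
  intros hk hS hmu. pose proof PI_RGT_0. pose proof (delta_pos S mu hS hmu) as Hd.
  unfold Rfun, key_rhs, tau0. rewrite g'_formula. unfold g.
  set (t := tau1 k b beta).
  replace (t * - a) with (- (a * k * (t / k))) by (field; lra).
  set (z := a * k * (t / k)).
  assert (HS : S = delta S mu * (2 * PI * mu)) by (unfold delta; field; lra).
  set (d := delta S mu) in *.
  pose proof (exp_pos z). pose proof (exp_pos (- z)).
  rewrite HS. unfold tanh, sinh, cosh. rewrite Ropp_involutive.
  assert (0 < d * k ^ 2) by (apply Rmult_lt_0_compat; [lra | apply pow_lt; lra]).
  field. repeat split; intro; [lra | lra | nra].
Qed.

(* The first factors are positive, so R(a) = 0 is exactly the key equation. *)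
Lemma Rfun_zero_iff k b beta S mu a : 0 < k -> 0 < S -> 0 < mu ->
  (Rfun k b beta S mu a = 0 <-> key_eq k b beta S mu a).
Proof.
  intros hk hS hmu. pose proof PI_RGT_0. pose proof (delta_pos S mu hS hmu).
  rewrite Rfun_factorization by assumption.
  change (key_eq k b beta S mu a) with (tanh (a * k * tau0 k b beta) = key_rhs k b beta S mu).
  assert (Hc : 0 < cosh (a * k * tau0 k b beta)).
  { unfold cosh. pose proof (exp_pos (a * k * tau0 k b beta)).
    pose proof (exp_pos (- (a * k * tau0 k b beta))). lra. }
  assert (Hpos : 0 < 2 * PI * mu * cosh (a * k * tau0 k b beta)
                     * (tau1 k b beta ^ 2 + k ^ 2 * delta S mu)).
  { assert (0 < tau1 k b beta ^ 2 + k ^ 2 * delta S mu).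
    { apply Rplus_le_lt_0_compat; [apply pow2_ge_0|].
      apply Rmult_lt_0_compat; [apply pow_lt|]; lra. }
    assert (0 < 2 * PI * mu) by (apply Rmult_lt_0_compat; lra).
    apply Rmult_lt_0_compat; [apply Rmult_lt_0_compat|]; lra. }
  split; intro Heq.
  - destruct (Rmult_integral _ _ Heq); lra.
  - rewrite Heq. ring.
Qed.

Definition key_root (k b beta S mu : R) : R :=
  atanh (key_rhs k b beta S mu) / (k * tau0 k b beta).

Lemma key_root_spec k b beta S mu : 0 < k -> 0 < b -> 0 < beta < 1 ->
  0 < key_rhs k b beta S mu < tanh (b * k * tau0 k b beta) ->
  0 < key_root k b beta S mu < b /\ key_eq k b beta S mu (key_root k b beta S mu).
Proof.
  intros hk hb Hbeta Hr.
  destruct (tau0_equation k b beta hk hb Hbeta) as [Ht0 _].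
  pose proof (tanh_bounds (b * k * tau0 k b beta)).
  assert (Hx : tanh (atanh (key_rhs k b beta S mu)) = key_rhs k b beta S mu)
    by (apply tanh_atanh; lra).
  assert (Hkt : 0 < k * tau0 k b beta) by (apply Rmult_lt_0_compat; lra).
  unfold key_root, key_eq. fold (key_rhs k b beta S mu).
  set (x := atanh (key_rhs k b beta S mu)) in *.
  assert (Hx0 : 0 < x) by (apply tanh_lt_reflect; rewrite tanh_0; lra).
  assert (Hxb : x < b * (k * tau0 k b beta))
    by (apply tanh_lt_reflect; rewrite Rmult_assoc in Hr; lra).
  split; [split|].
  - apply Rdiv_lt_0_compat; lra.
  - apply Rmult_lt_reg_r with (k * tau0 k b beta); [lra|].
    unfold Rdiv. rewrite Rmult_assoc, Rinv_l; lra.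
  - replace (x / (k * tau0 k b beta) * k * tau0 k b beta) with x by (field; lra).
    exact Hx.
Qed.

Lemma key_eq_no_root k b beta S mu : 0 < k -> 0 < b -> 0 < beta < 1 ->
  tanh (b * k * tau0 k b beta) <= key_rhs k b beta S mu ->
  forall a, 0 < a < b -> ~ key_eq k b beta S mu a.
Proof.
  intros hk hb Hbeta Hr a Ha Heq.
  destruct (tau0_equation k b beta hk hb Hbeta) as [Ht0 _].
  assert (tanh (a * k * tau0 k b beta) < tanh (b * k * tau0 k b beta)).
  { apply tanh_increasing. apply Rmult_lt_compat_r; [|apply Rmult_lt_compat_r]; lra. }
  unfold key_eq in Heq. fold (key_rhs k b beta S mu) in Heq. lra.
Qed.

Lemma filterlim_at_right_linear_error (f : R -> R) (l K alpha0 : R) : 0 < alpha0 ->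
  (forall alpha, 0 < alpha < alpha0 -> Rabs (f alpha - l) <= K * alpha) ->
  filterlim f (at_right 0) (locally l).
Proof.
  intros Ha0 Hf. apply filterlim_locally. intros eps.
  set (K' := Rabs K + 1).
  assert (HK' : 0 < K') by (unfold K'; pose proof (Rabs_pos K); lra).
  assert (Hdelta : 0 < Rmin alpha0 (eps / K'))
    by (apply Rmin_glb_lt; [lra | apply Rdiv_lt_0_compat; [apply cond_pos | lra]]).
  exists (mkposreal _ Hdelta). intros y Hy Hy0. change R in y. simpl in Hy.
  unfold ball in Hy; simpl in Hy; unfold AbsRing_ball, abs, minus, plus, opp in Hy; simpl in Hy.
  rewrite Ropp_0, Rplus_0_r, Rabs_pos_eq in Hy by lra.
  pose proof (Rmin_l alpha0 (eps / K')). pose proof (Rmin_r alpha0 (eps / K')).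
  assert (HKy : K * y <= K' * y)
    by (apply Rmult_le_compat_r; unfold K'; [lra | pose proof (Rle_abs K); lra]).
  assert (K' * y < eps).
  { apply Rmult_lt_reg_r with (/ K'); [apply Rinv_0_lt_compat; lra|].
    replace (K' * y * / K') with y by (field; lra). unfold Rdiv in *. lra. }
  specialize (Hf y ltac:(lra)).
  change (Rabs (f y - l) < eps). lra.
Qed.

Lemma delta_lt_1 S mu : 0 < mu -> S < 2 * PI * mu -> delta S mu < 1.
Proof.
  intros hmu hSmu. unfold delta.
  assert (0 < 2 * PI * mu) by (pose proof PI_RGT_0; nra).
  apply Rmult_lt_reg_r with (2 * PI * mu); [lra|].
  unfold Rdiv. rewrite Rmult_assoc, Rinv_l; lra.
Qed.

Section Regimes.

Variables k b S mu : R.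
Hypotheses (hk : 0 < k) (hb : 0 < b) (hS : 0 < S) (hmu : 0 < mu) (hSmu : S < 2 * PI * mu).

Let hbk : 0 < b * k := Rmult_lt_0_compat b k hb hk.

(* For beta <= 1/2, tau0 lies in [1 / tanh (b k U), U] with U = 2 (2 + 1/(b k)):
   a compact subset of (1, +oo), uniformly in beta. *)
Lemma tau0_small_beta beta : 0 < beta <= 1/2 ->
  1 / tanh (b * k * (2 * (2 + 1 / (b * k)))) <= tau0 k b beta <= 2 * (2 + 1 / (b * k)).
Proof.
  intros Hbeta.
  destruct (tau0_equation k b beta hk hb ltac:(lra)) as [Ht0 Heq].
  destruct (tau0_bounds k b beta hk hb ltac:(lra)) as [Hlo Hhi].
  set (t0 := tau0 k b beta) in *. set (U := 2 * (2 + 1 / (b * k))).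
  set (c0 := 1 / (b * k)) in *.
  assert (Hc0 : 0 < c0) by (apply Rdiv_lt_0_compat; lra).
  assert (Ht1 : 1 < t0) by nra.
  assert (Hq : 1 / (b * k * t0) < c0).
  { assert (1 / (b * k * t0) * t0 = c0) by (unfold c0; field; lra).
    assert (0 < 1 / (b * k * t0)) by (apply Rdiv_lt_0_compat; nra). nra. }
  assert (HtU : t0 <= U) by (unfold U; nra).
  split; [|exact HtU].
  set (T1 := tanh (b * k * U)).
  assert (HT : tanh (b * k * t0) <= T1) by (apply tanh_le, Rmult_le_compat_l; lra).
  assert (HT1 : 0 < T1) by (apply tanh_pos; unfold U; nra).
  assert (HE : 1 <= ((1 - beta) * t0 - beta) * T1) by nra.
  assert (1 / T1 <= (1 - beta) * t0 - beta).
  { apply Rmult_le_reg_r with T1; [lra|].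
    replace (1 / T1 * T1) with 1 by (field; lra). lra. }
  nra.
Qed.

(* rhs >= T  iff  t0 (1+d) ((1-beta) t0 - beta) >= t0^2 + d, and the difference factors
   as (t0 + 1) (d (t0 - 1) - beta (1 + d) t0). *)
Lemma tanh_le_rhs_criterion beta : 0 < beta < 1 ->
  beta * (1 + delta S mu) * tau0 k b beta <= delta S mu * (tau0 k b beta - 1) ->
  tanh (b * k * tau0 k b beta) <= key_rhs k b beta S mu.
Proof.
  intros Hbeta Hcrit.
  destruct (tau0_equation k b beta hk hb Hbeta) as [Ht0 Heq].
  destruct (tau0_bounds k b beta hk hb Hbeta) as [HE _].
  pose proof (delta_pos S mu hS hmu) as Hd.
  unfold key_rhs. set (t0 := tau0 k b beta) in *. set (d := delta S mu) in *.
  set (E := (1 - beta) * t0 - beta) in *. set (T := tanh (b * k * t0)) in *.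
  assert (Hden : 0 < t0 ^ 2 + d) by nra.
  assert (Hfac : t0 * (1 + d) * E - (t0 ^ 2 + d)
                 = (t0 + 1) * (d * (t0 - 1) - beta * (1 + d) * t0)) by (unfold E; ring).
  assert (Hkey : t0 ^ 2 + d <= t0 * (1 + d) * E) by nra.
  apply Rmult_le_reg_r with ((t0 ^ 2 + d) * E); [nra|].
  replace (t0 * (1 + d) / (t0 ^ 2 + d) * ((t0 ^ 2 + d) * E)) with (t0 * (1 + d) * E)
    by (field; lra).
  nra.
Qed.

Lemma no_root_small_beta : exists beta0, 0 < beta0 /\
  forall beta, 0 < beta < beta0 -> forall a, 0 < a < b -> ~ key_eq k b beta S mu a.
Proof.
  pose proof (delta_pos S mu hS hmu) as Hd. pose proof (delta_lt_1 S mu hmu hSmu) as Hd1.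
  set (d := delta S mu) in *.
  set (U := 2 * (2 + 1 / (b * k))).
  assert (HU : 0 < U).
  { unfold U. assert (0 < 1 / (b * k)) by (apply Rdiv_lt_0_compat; lra). lra. }
  set (T1 := tanh (b * k * U)).
  assert (HT1 : 0 < T1 < 1) by (split; [apply tanh_pos; nra | apply tanh_bounds]).
  set (eta := 1 / T1 - 1).
  assert (Heta : 0 < eta).
  { unfold eta. assert (1 < 1 / T1); [|lra].
    apply Rmult_lt_reg_r with T1; [lra|]. replace (1 / T1 * T1) with 1 by (field; lra). lra. }
  set (beta0 := Rmin (1 / 2) (d * eta / (2 * U))).
  assert (Hb0 : 0 < d * eta / (2 * U)) by (apply Rdiv_lt_0_compat; nra).
  exists beta0. split; [apply Rmin_glb_lt; lra|].
  intros beta Hbeta.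
  pose proof (Rmin_l (1 / 2) (d * eta / (2 * U))) as Hmin1.
  pose proof (Rmin_r (1 / 2) (d * eta / (2 * U))) as Hmin2.
  fold beta0 in Hmin1, Hmin2.
  assert (Hb2 : beta * (2 * U) < d * eta).
  { apply Rmult_lt_reg_r with (/ (2 * U)); [apply Rinv_0_lt_compat; lra|].
    replace (beta * (2 * U) * / (2 * U)) with beta by (field; lra).
    unfold Rdiv in Hmin2. lra. }
  (* t0 in [1 + eta, U], so beta (1 + d) t0 <= 2 beta U < d eta <= d (t0 - 1) *)
  destruct (tau0_small_beta beta ltac:(lra)) as [Hlo Hhi]. fold U T1 in Hlo, Hhi.
  apply key_eq_no_root; [assumption | assumption | lra |].
  apply tanh_le_rhs_criterion; [lra|]. fold d.
  set (t0 := tau0 k b beta) in *.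
  assert (beta * ((1 + d) * t0) <= beta * (2 * U)).
  { apply Rmult_le_compat_l; [lra|]. nra. }
  assert (d * eta <= d * (t0 - 1)) by (apply Rmult_le_compat_l; unfold eta; lra).
  lra.
Qed.

(* For beta = 1 - alpha the relation reads alpha t0 = 1/T + 1 - alpha, so alpha t0 -> 2. *)
Lemma tau0_small_alpha alpha : 0 < alpha <= 1/2 ->
  2 - alpha < alpha * tau0 k b (1 - alpha) < 2 + alpha / (b * k).
Proof.
  intros Halpha.
  destruct (tau0_equation k b (1 - alpha) hk hb ltac:(lra)) as [Ht0 _].
  destruct (tau0_bounds k b (1 - alpha) hk hb ltac:(lra)) as [Hlo Hhi].
  replace (1 - (1 - alpha)) with alpha in Hlo, Hhi by ring.
  set (t0 := tau0 k b (1 - alpha)) in *.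
  assert (Hq : 1 / (b * k * t0) < alpha / (b * k)).
  { assert (Hq : 1 / (b * k * t0) * (alpha * t0) = alpha / (b * k)) by (field; lra).
    assert (0 < 1 / (b * k * t0)) by (apply Rdiv_lt_0_compat; nra). nra. }
  lra.
Qed.

(* Hence rhs ~ alpha (1 + d) / 2 is small, while tanh (b k t0) -> 1. *)
Lemma rhs_small_alpha alpha : 0 < alpha <= 1/8 -> alpha / (b * k) <= 1/2 ->
  0 < key_rhs k b (1 - alpha) S mu < 2 * alpha /\
  2 * alpha < tanh (b * k * tau0 k b (1 - alpha)).
Proof.
  intros Halpha Hc.
  destruct (tau0_equation k b (1 - alpha) hk hb ltac:(lra)) as [Ht0 Heq].
  destruct (tau0_small_alpha alpha ltac:(lra)) as [HA1 HA2].
  replace (1 - (1 - alpha)) with alpha in Heq by ring.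
  pose proof (delta_pos S mu hS hmu) as Hd. pose proof (delta_lt_1 S mu hmu hSmu) as Hd1.
  unfold key_rhs. set (t0 := tau0 k b (1 - alpha)) in *. set (d := delta S mu) in *.
  set (r := t0 * (1 + d) / (t0 ^ 2 + d)).
  assert (Hr : r * (t0 ^ 2 + d) = t0 * (1 + d)) by (unfold r; field; nra).
  assert (Hr0 : 0 < r) by (unfold r; apply Rdiv_lt_0_compat; nra).
  split; [split; [exact Hr0|] |].
  - assert (Hrt : r * t0 < 2) by nra. nra.
  - set (T := tanh (b * k * t0)) in *. nra.
Qed.

(* The quantitative form of a* ~ alpha^2 (1 + d) / (4 k): the ratio equals
   4 (atanh r / r) / (alpha^2 (t0^2 + d)), and both factors are 1 + O(alpha). *)
Lemma key_root_ratio alpha : 0 < alpha <= 1/8 -> alpha / (b * k) <= 1/2 ->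
  Rabs (key_root k b (1 - alpha) S mu / (alpha ^ 2 * (1 + delta S mu) / (4 * k)) - 1)
  <= (10 + 2 / (b * k)) * alpha.
Proof.
  intros Halpha Hc.
  destruct (tau0_equation k b (1 - alpha) hk hb ltac:(lra)) as [Ht0 _].
  destruct (tau0_small_alpha alpha ltac:(lra)) as [HA1 HA2].
  destruct (rhs_small_alpha alpha Halpha Hc) as [Hr _].
  pose proof (delta_pos S mu hS hmu) as Hd. pose proof (delta_lt_1 S mu hmu hSmu) as Hd1.
  destruct (atanh_ratio (key_rhs k b (1 - alpha) S mu) ltac:(lra)) as [Hp1 Hp2].
  unfold key_root. set (r := key_rhs k b (1 - alpha) S mu) in *.
  set (p := atanh r / r) in *.
  set (t0 := tau0 k b (1 - alpha)) in *. set (d := delta S mu) in *.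
  set (c0 := 1 / (b * k)).
  replace (alpha / (b * k)) with (c0 * alpha) in * by (unfold c0; field; lra).
  assert (Hc0 : 0 < c0) by (apply Rdiv_lt_0_compat; lra).
  set (D := alpha ^ 2 * (t0 ^ 2 + d)).
  assert (HQ : atanh r / (k * t0) / (alpha ^ 2 * (1 + d) / (4 * k)) = 4 * p / D).
  { unfold p, D, r, key_rhs. fold t0 d. field. repeat split; nra. }
  rewrite HQ.
  (* D = (alpha t0)^2 + alpha^2 d with 2 - alpha < alpha t0 < 2 + c0 alpha *)
  set (A := alpha * t0) in *.
  assert (HD : D = A ^ 2 + alpha ^ 2 * d) by (unfold D, A; ring).
  assert (HDlo : 7 / 2 <= D) by nra.
  assert (HDhi : D <= 4 + (4 * c0 + c0 / 2 + 1 / 8) * alpha).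
  { assert (HA : A ^ 2 <= (2 + c0 * alpha) ^ 2) by nra.
    assert (Hca : 0 <= c0 * alpha) by (apply Rmult_le_pos; lra).
    assert (c0 * alpha * (c0 * alpha) <= c0 * alpha * (1 / 2))
      by (apply Rmult_le_compat_l; lra).
    assert (alpha ^ 2 * d <= alpha * (1 / 8)).
    { replace (alpha ^ 2 * d) with (alpha * (alpha * d)) by ring.
      apply Rmult_le_compat_l; nra. }
    replace ((2 + c0 * alpha) ^ 2) with (4 + 4 * (c0 * alpha) + c0 * alpha * (c0 * alpha))
      in HA by ring.
    lra. }
  (* p = 1 + O(alpha) and D = 4 + O(alpha), so 4 p / D - 1 = (4 p - D) / D = O(alpha) *)
  assert (Herr : Rabs (4 * p - D) <= (33 + 5 * c0) * alpha) by (apply Rabs_le; split; nra).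
  replace (2 / (b * k)) with (2 * c0) by (unfold c0; field; lra).
  replace (4 * p / D - 1) with ((4 * p - D) / D) by (field; lra).
  unfold Rdiv. rewrite Rabs_mult, Rabs_inv, (Rabs_pos_eq D) by lra.
  apply Rmult_le_reg_r with D; [lra|].
  rewrite Rmult_assoc, Rinv_l, Rmult_1_r by lra.
  assert ((10 + 2 * c0) * alpha * (7 / 2) <= (10 + 2 * c0) * alpha * D)
    by (apply Rmult_le_compat_l; [apply Rmult_le_pos|]; lra).
  lra.
Qed.

End Regimes.

Theorem mainTheorem4 (k b S mu : R) (hk : 0 < k) (hb : 0 < b)
  (hS : 0 < S) (hmu : 0 < mu) (hSmu : S < 2 * PI * mu) :
  (forall beta a, 0 < beta < 1 -> 0 < a < b ->
     (Rfun k b beta S mu a = 0 <-> key_eq k b beta S mu a)) /\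
  (exists alpha0, 0 < alpha0 /\
     exists astar : R -> R,
       (forall alpha, 0 < alpha < alpha0 ->
          0 < astar alpha < b /\ key_eq k b (1 - alpha) S mu (astar alpha)) /\
       filterlim (fun alpha => astar alpha / (alpha ^ 2 * (1 + delta S mu) / (4 * k)))
                 (at_right 0) (locally 1)) /\
  (exists beta0, 0 < beta0 /\
     forall beta, 0 < beta < beta0 ->
       forall a, 0 < a < b -> ~ key_eq k b beta S mu a).
Proof.
  split; [|split].
  - intros beta a _ _. now apply Rfun_zero_iff.
  - assert (Hbk : 0 < b * k) by (apply Rmult_lt_0_compat; lra).
    set (alpha0 := Rmin (1 / 8) (b * k / 2)).
    assert (Hsmall : forall alpha, 0 < alpha < alpha0 ->
                       0 < alpha <= 1 / 8 /\ alpha / (b * k) <= 1 / 2).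
    { intros alpha Halpha.
      pose proof (Rmin_l (1 / 8) (b * k / 2)) as Hmin1.
      pose proof (Rmin_r (1 / 8) (b * k / 2)) as Hmin2.
      fold alpha0 in Hmin1, Hmin2. split; [lra|].
      apply Rmult_le_reg_r with (b * k); [lra|].
      replace (alpha / (b * k) * (b * k)) with alpha by (field; lra). lra. }
    exists alpha0. split; [apply Rmin_glb_lt; lra|].
    exists (fun alpha => key_root k b (1 - alpha) S mu). split.
    + intros alpha Halpha. destruct (Hsmall alpha Halpha) as [Ha Hc].
      destruct (rhs_small_alpha k b S mu hk hb hS hmu hSmu alpha Ha Hc) as [Hr HT].
      apply key_root_spec; [assumption | assumption | lra | lra].
    + apply (filterlim_at_right_linear_error _ _ (10 + 2 / (b * k)) alpha0);
        [apply Rmin_glb_lt; lra |].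
      intros alpha Halpha. destruct (Hsmall alpha Halpha) as [Ha Hc].
      exact (key_root_ratio k b S mu hk hb hS hmu hSmu alpha Ha Hc).
  - exact (no_root_small_beta k b S mu hk hb hS hmu hSmu).
Qed.
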